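(* Let $Q,M,B\in\mathbb{R}^{n\times n}$ be symmetric positive semidefinite, set $M_B=BMB$, and assume $\operatorname{Im}\{M_B\}\subseteq\operatorname{Im}\{Q\}$. Define $$\Omega=\{\Pi\in\mathbb{R}^{n\times n}: Q-\Pi M^\dagger\Pi^\top\succeq0,\ \Pi^\top=MM^\dagger\Pi^\top\},$$ $$\mathcal{S}=\{(S,S^-): S\succeq0,\ S^-\succeq0,\ SS^-S=S,\ S^-SS^-=S^-,\ BM=SS^-BM\}.$$ Then $$\min_{(S,S^-)\in\mathcal{S}}\big\{\operatorname{tr}(QS)+\operatorname{tr}(M\,BS^-B)\big\}=\max_{\Pi\in\Omega}\operatorname{tr}\{2\Pi B\}=2\operatorname{tr}\Big\{\big(M_B^{1/2}QM_B^{1/2}\big)^{1/2}\Big\}.$$ The extreme values are attained at $S^*=M_B^{1/2}\big((M_B^{1/2}QM_B^{1/2})^{1/2}\big)^\dagger M_B^{1/2}$, $S^{-*}=(M_B^{1/2})^\dagger(M_B^{1/2}QM_B^{1/2})^{1/2}(M_B^{1/2})^\dagger$, and $\Pi^*=QS^*M_B^\dagger BM=QM_B^{1/2}\big((M_B^{1/2}QM_B^{1/2})^{1/2}\big)^\dagger(M_B^{1/2})^\dagger BM$; the optimal $\Pi^*$ is in general not unique.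
   Context: $\dagger$ denotes the Moore–Penrose pseudoinverse, $\operatorname{Im}$ the column space, and $X^{1/2}$ the PSD square root of a PSD matrix $X$. *)

From HB Require Import structures.
From mathcomp Require Import all_boot all_order all_algebra.
From mathcomp Require Import boolp classical_sets reals.
Set Implicit Arguments. Unset Strict Implicit. Unset Printing Implicit Defensive.
Import Order.TTheory GRing.Theory Num.Theory.
Local Open Scope ring_scope.

Definition psd {R : realType} {n : nat} (A : 'M[R]_n) : Prop :=
  A^T = A /\ forall x : 'cV[R]_n, 0 <= (x^T *m A *m x) 0 0.

Definition penrose {R : realType} {m n : nat} (A : 'M[R]_(m, n)) (X : 'M[R]_(n, m)) : Prop :=
  [/\ A *m X *m A = A, X *m A *m X = X, (A *m X)^T = A *m X & (X *m A)^T = X *m A].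

Definition pinv {R : realType} {m n : nat} (A : 'M[R]_(m, n)) : 'M[R]_(n, m) :=
  xget 0 (fun X => penrose A X).

Definition psd_sqrt {R : realType} {n : nat} (A : 'M[R]_n) : 'M[R]_n :=
  xget 0 (fun X => psd X /\ X *m X = A).

(* Column-space inclusion Im{A} ⊆ Im{B} (mxalgebra works with row spaces). *)
Definition colspace_sub {R : realType} {m n p : nat}
  (A : 'M[R]_(m, n)) (B : 'M[R]_(m, p)) : bool := (A^T <= B^T)%MS.

Definition Omega {R : realType} {n : nat} (Q M : 'M[R]_n) (Pi : 'M[R]_n) : Prop :=
  psd (Q - Pi *m pinv M *m Pi^T) /\ Pi^T = M *m pinv M *m Pi^T.

Definition Sset {R : realType} {n : nat} (B M : 'M[R]_n) (S Sm : 'M[R]_n) : Prop :=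
  [/\ psd S, psd Sm, S *m Sm *m S = S, Sm *m S *m Sm = Sm & B *m M = S *m Sm *m B *m M].

Definition primal_obj {R : realType} {n : nat} (Q M B : 'M[R]_n) (S Sm : 'M[R]_n) : R :=
  \tr (Q *m S) + \tr (M *m (B *m Sm *m B)).

Definition dual_obj {R : realType} {n : nat} (B : 'M[R]_n) (Pi : 'M[R]_n) : R :=
  \tr (2%:R *: (Pi *m B)).

From HB Require Import structures.
From mathcomp Require Import all_boot all_order all_algebra.
From mathcomp Require Import boolp classical_sets reals complex.
From mathcomp Require Import lra.
Set Implicit Arguments. Unset Strict Implicit. Unset Printing Implicit Defensive.
Import Order.TTheory GRing.Theory Num.Theory.
Local Open Scope ring_scope.

(* Weak duality: for (S, S^-) in 𝒮 and Π in Ω, the duality gap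
   tr(QS) + tr(M B S^- B) - 2 tr(ΠB) equals tr((Q - ΠM^†Π^T) S) + tr(D M^† D^T S)
   with D = Π - S^- B M, a sum of traces of products of PSD matrices.
   Strong duality: with K = M_B^{1/2} and C = (KQK)^{1/2}, the pair
   (K C^† K, K^† C K^†) and Π* = Q K C^† K^† B M are feasible and both objectives
   equal 2 tr C; the range hypothesis Im M_B ⊆ Im Q is what makes C C^† fix K.
   Square roots and pseudoinverses of symmetric matrices are polynomials in the
   matrix: a real symmetric matrix has real eigenvalues and is annihilated by
   the product of the X - λ over its distinct eigenvalues λ, so every function on
   its spectrum is interpolated by a polynomial.
   For Q = M = 1 and B = diag(1, 0) in dimension 2, both diag(1, 0) and 1 are
   optimal dual points. *)

Section Hermitian.
Local Open Scope sesquilinear_scope.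

Lemma hermitian_eigenvalue_real (C : numClosedFieldType) n (A : 'M[C]_n) z :
  A^t* = A -> eigenvalue A z -> z \is Num.real.
Proof.
move=> hA /eigenvalueP [v vA v_neq0].
have v_gt0 : 0 < (v *m v^t*) 0 0 by rewrite -dotmxE dotmx_is_dotmx.
have : z * (v *m v^t*) 0 0 = z^* * (v *m v^t*) 0 0.
  have -> : z * (v *m v^t*) 0 0 = (v *m A *m v^t*) 0 0.
    by rewrite vA -scalemxAl [RHS]mxE.
  have tA : A *m v^t* = (v *m A)^t* by rewrite trmx_mul map_mxM hA.
  by rewrite -mulmxA tA vA linearZ /= map_mxZ -scalemxAr [LHS]mxE.
by move/(mulIf (lt0r_neq0 v_gt0)) => /esym /CrealP.
Qed.

End Hermitian.

Section PolynomialInterpolation.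
Variable F : fieldType.

Lemma dvdp_prod_XsubC_undupX (s t : seq F) : {subset s <= t} ->
  \prod_(x <- s) ('X - x%:P) %| (\prod_(x <- undup t) ('X - x%:P)) ^+ size s.
Proof.
elim: s => [|x s IHs] sub_st; first by rewrite big_nil dvd1p.
rewrite big_cons exprS dvdp_mul ?IHs // => [|y s_y]; last by rewrite sub_st // inE s_y orbT.
by rewrite dvdp_XsubCl root_prod_XsubC mem_undup sub_st ?mem_head.
Qed.

Lemma poly_interpolation (ev : seq F) (f : F -> F) : uniq ev ->
  exists p : {poly F}, {in ev, forall x, p.[x] = f x}.
Proof.
elim: ev => [|x ev IHev] /=; first by exists 0.
case/andP => ev'x /IHev [p p_ev]; pose w := \prod_(y <- ev) ('X - y%:P).
have wx_neq0 : w.[x] != 0 by rewrite -/(root w x) root_prod_XsubC.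
exists (p + ((f x - p.[x]) / w.[x]) *: w) => y; rewrite inE => /predU1P [->|ev_y].
  by rewrite hornerD hornerZ divfK // addrC subrK.
have /rootP wy0 : root w y by rewrite root_prod_XsubC.
by rewrite hornerD hornerZ wy0 mulr0 addr0 p_ev.
Qed.

Lemma horner_mx_eq_on n (A : 'M[F]_n.+1) (ev : seq F) (p q : {poly F}) :
  uniq ev -> horner_mx A (\prod_(x <- ev) ('X - x%:P)) = 0 ->
  {in ev, forall x, p.[x] = q.[x]} -> horner_mx A p = horner_mx A q.
Proof.
move=> ev_uniq ev_ann pq_ev; apply/eqP; rewrite -subr_eq0 -rmorphB; apply/eqP.
have [r ->] : exists r, p - q = r * \prod_(x <- ev) ('X - x%:P).
  apply: uniq_roots_prod_XsubC; last by rewrite uniq_rootsE.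
  by apply/allP => x /pq_ev pqx; rewrite rootE !hornerE pqx subrr.
by rewrite rmorphM /= ev_ann mulr0.
Qed.

End PolynomialInterpolation.

Section ComRingMatrix.
Variable R : comNzRingType.

Lemma trmxX n (T : 'M[R]_n.+1) k : (T ^+ k)^T = T^T ^+ k.
Proof.
elim: k => [|k IHk]; first by rewrite !expr0 trmx1.
by rewrite exprS -mulmxE trmx_mul IHk exprSr mulmxE.
Qed.

Lemma horner_mx_sym n (A : 'M[R]_n.+1) p : A^T = A -> (horner_mx A p)^T = horner_mx A p.
Proof.
move=> sA; elim/poly_ind: p => [|p c IHp]; first by rewrite rmorph0 trmx0.
rewrite rmorphD rmorphM /= horner_mx_C horner_mx_X linearD /= tr_scalar_mx.
rewrite -mulmxE trmx_mul IHp sA -[A in A *m _]horner_mx_X mulmxE -rmorphM.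
by rewrite mulrC rmorphM /= horner_mx_X.
Qed.

End ComRingMatrix.

Section RealSymmetric.
Variable R : realType.

Lemma symmetric_char_poly_split n (A : 'M[R]_n) : A^T = A ->
  exists rs : seq R, char_poly A = \prod_(x <- rs) ('X - x%:P).
Proof.
move=> sA; pose f := real_complex R; pose Ac := map_mx f A.
have [zs] := closed_field_poly_normal (char_poly Ac).
rewrite (monicP (char_poly_monic _)) scale1r => char_Ac.
have zs_real z : z \in zs -> ((complex.Re z)%:C)%C = z.
  move=> z_zs; apply: RRe_real; apply: (@hermitian_eigenvalue_real _ _ Ac).
    apply/matrixP => i j; rewrite !mxE -[in A j i]sA mxE conj_Creal //.
    by apply/complex_realP; exists (A i j).
  by rewrite eigenvalue_root_char char_Ac root_prod_XsubC.
exists (map (@complex.Re R) zs); apply: (@map_poly_inj _ _ f).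
rewrite map_char_poly char_Ac rmorph_prod big_map /=.
by apply: eq_big_seq => z /zs_real zE; rewrite map_polyXsubC /= zE.
Qed.

Lemma gram_eq0 m n (X : 'M[R]_(m, n)) : X^T *m X = 0 -> X = 0.
Proof.
move=> /matrixP XX0; apply/matrixP => i j; rewrite mxE.
have /eqP := XX0 j j; rewrite !mxE psumr_eq0 => [/allP/(_ i (mem_index_enum _))|k _].
  by rewrite mxE -expr2 sqrf_eq0 => /eqP.
by rewrite mxE -expr2 sqr_ge0.
Qed.

Lemma psd_gram m n (X : 'M[R]_(m, n)) : psd (X^T *m X).
Proof.
split=> [|y]; first by rewrite trmx_mul trmxK.
rewrite mulmxA -trmx_mul -mulmxA mxE; apply: sumr_ge0 => i _.
by rewrite mxE -expr2 sqr_ge0.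
Qed.

Lemma psd_congr m n (A : 'M[R]_m) (X : 'M[R]_(m, n)) : psd A -> psd (X^T *m A *m X).
Proof.
move=> [sA A_ge0]; split=> [|y]; first by rewrite !trmx_mul trmxK sA mulmxA.
by have := A_ge0 (X *m y); rewrite trmx_mul !mulmxA.
Qed.

Lemma sym_nilpotent_eq0 n (T : 'M[R]_n.+1) k : T^T = T -> T ^+ k = 0 -> T = 0.
Proof.
move=> sT; elim/ltn_ind: k => -[|[|k]] IHk Tk0.
- by move/eqP: Tk0; rewrite expr0 oner_eq0.
- by rewrite -[T]expr1.
- apply: (IHk k.+1) => //; apply: gram_eq0.
  by rewrite trmxX sT mulmxE -exprD addSnnS exprD Tk0 mulr0.
Qed.

Lemma symmetric_annihilating_roots n (A : 'M[R]_n.+1) : A^T = A ->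
  exists ev : seq R, [/\ uniq ev, horner_mx A (\prod_(x <- ev) ('X - x%:P)) = 0
                       & forall x, x \in ev -> eigenvalue A x].
Proof.
move=> sA; have [rs char_A] := symmetric_char_poly_split sA.
exists (undup rs); split; first exact: undup_uniq.
  apply: (@sym_nilpotent_eq0 _ _ (size rs)); first exact: horner_mx_sym.
  have /dvdpP [q prodX] := @dvdp_prod_XsubC_undupX _ rs rs (fun=> id).
  by rewrite -rmorphXn /= prodX rmorphM /= -char_A Cayley_Hamilton mulr0.
by move=> x; rewrite mem_undup eigenvalue_root_char char_A root_prod_XsubC.
Qed.

Lemma horner_mx_psd n (A : 'M[R]_n.+1) (ev : seq R) (p : {poly R}) :
  A^T = A -> uniq ev -> horner_mx A (\prod_(x <- ev) ('X - x%:P)) = 0 ->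
  {in ev, forall x, 0 <= p.[x]} -> psd (horner_mx A p).
Proof.
move=> sA ev_uniq ev_ann p_ge0.
have [r r_ev] := poly_interpolation (fun x => Num.sqrt p.[x]) ev_uniq.
suff -> : horner_mx A p = (horner_mx A r)^T *m horner_mx A r by exact: psd_gram.
rewrite horner_mx_sym // mulmxE -rmorphM; apply: horner_mx_eq_on ev_uniq ev_ann _ => x ev_x.
by rewrite hornerM r_ev // -expr2 sqr_sqrtr ?p_ge0.
Qed.

Lemma psd_eigenvalue_ge0 n (A : 'M[R]_n) x : psd A -> eigenvalue A x -> 0 <= x.
Proof.
move=> [_ A_ge0] /eigenvalueP [v vA v_neq0].
have vv_gt0 : 0 < (v *m v^T) 0 0.
  have vv_ge0 i : 0 <= v 0 i * v^T i 0 by rewrite mxE -expr2 sqr_ge0.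
  rewrite lt0r mxE sumr_ge0 // andbT psumr_eq0 //.
  apply: contra v_neq0 => /allP v0; apply/eqP/rowP => i.
  by have := v0 i (mem_index_enum _); rewrite mxE -expr2 sqrf_eq0 mxE => /eqP.
by have := A_ge0 v^T; rewrite trmxK vA -scalemxAl mxE pmulr_lge0.
Qed.

Lemma psd_sqrt_exists n (A : 'M[R]_n) : psd A -> exists X, psd X /\ X *m X = A.
Proof.
case: n A => [|n] A psdA.
  by exists A; rewrite [A *m A]flatmx0 [A in _ = A]flatmx0.
have [ev [ev_uniq ev_ann ev_eig]] := symmetric_annihilating_roots psdA.1.
have [p p_ev] := poly_interpolation Num.sqrt ev_uniq.
have ev_ge0 x : x \in ev -> 0 <= x by move/ev_eig; exact: psd_eigenvalue_ge0.
exists (horner_mx A p); split.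
  by apply: (horner_mx_psd psdA.1 ev_uniq ev_ann) => x ev_x; rewrite p_ev ?sqrtr_ge0.
rewrite mulmxE -rmorphM -[RHS]horner_mx_X; apply: horner_mx_eq_on ev_uniq ev_ann _ => x ev_x.
by rewrite hornerM hornerX p_ev // -expr2 sqr_sqrtr ?ev_ge0.
Qed.

Lemma penrose_exists n (A : 'M[R]_n) : A^T = A -> exists X, penrose A X.
Proof.
case: n A => [|n] A sA; first by exists 0; split; rewrite !flatmx0.
have [ev [ev_uniq ev_ann _]] := symmetric_annihilating_roots sA.
have [p p_ev] := poly_interpolation GRing.inv ev_uniq.
have XA : horner_mx A p *m A = horner_mx A (p * 'X) by rewrite rmorphM /= horner_mx_X.
have AX : A *m horner_mx A p = horner_mx A (p * 'X) by rewrite mulrC rmorphM /= horner_mx_X.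
exists (horner_mx A p); split.
- rewrite AX mulmxE -[X in _ * X]horner_mx_X -rmorphM -[RHS]horner_mx_X.
  apply: horner_mx_eq_on ev_uniq ev_ann _ => x ev_x; rewrite !hornerE p_ev //.
  by have [->|x0] := eqVneq x 0; rewrite ?mulr0 // mulVf ?mul1r.
- rewrite XA mulmxE -rmorphM; apply: horner_mx_eq_on ev_uniq ev_ann _ => x ev_x.
  rewrite !hornerE p_ev //; have [->|x0] := eqVneq x 0; first by rewrite invr0 !mul0r.
  by rewrite mulVf ?mul1r.
- by rewrite AX horner_mx_sym.
- by rewrite XA horner_mx_sym.
Qed.

Lemma penrose_uniq m n (A : 'M[R]_(m, n)) X Y : penrose A X -> penrose A Y -> X = Y.
Proof.
move=> [X1 X2 X3 X4] [Y1 Y2 Y3 Y4].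
have AX_AY : A *m X = A *m Y.
  have AtE : A^T = A^T *m (A *m Y) by rewrite -{1}Y1 trmx_mul Y3.
  by rewrite -X3 trmx_mul AtE (mulmxA X^T) -trmx_mul X3 mulmxA X1.
have XA_YA : X *m A = Y *m A.
  have AtE : A^T = Y *m A *m A^T by rewrite -{1}Y1 -mulmxA trmx_mul Y4.
  rewrite -X4 trmx_mul AtE -!mulmxA -trmx_mul X4 !mulmxA.
  by rewrite -(mulmxA (Y *m A)) -(mulmxA Y) (mulmxA A) X1.
by rewrite -X2 -Y2 -mulmxA AX_AY mulmxA XA_YA.
Qed.

Lemma pinvP n (A : 'M[R]_n) : A^T = A -> penrose A (pinv A).
Proof. by move=> /penrose_exists [X AX]; exact: xgetI AX. Qed.

Lemma psd_sqrtP n (A : 'M[R]_n) : psd A -> psd (psd_sqrt A) /\ psd_sqrt A *m psd_sqrt A = A.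
Proof. by move=> /psd_sqrt_exists [X AX]; exact: (xgetI 0 (P := fun X => psd X /\ _) AX). Qed.

Lemma pinv_sym n (A : 'M[R]_n) : A^T = A -> (pinv A)^T = pinv A.
Proof.
move=> sA; have [P1 P2 P3 P4] := pinvP sA.
apply: (penrose_uniq (A := A)) (pinvP sA); split.
- by rewrite -{1 3}sA -!trmx_mul mulmxA P1.
- by rewrite -{2}sA -!trmx_mul mulmxA P2.
- by rewrite -{1}sA -trmx_mul P4 trmx_mul sA.
- by rewrite -{2}sA -trmx_mul P3 trmx_mul sA.
Qed.

Lemma pinv_comm n (A : 'M[R]_n) : A^T = A -> A *m pinv A = pinv A *m A.
Proof. by move=> sA; have [_ _ P3 _] := pinvP sA; rewrite -P3 trmx_mul pinv_sym // sA. Qed.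

Lemma psd_pinv n (A : 'M[R]_n) : psd A -> psd (pinv A).
Proof.
move=> psdA; have [_ P2 _ _] := pinvP psdA.1.
by rewrite -P2 -{1}(pinv_sym psdA.1); exact: psd_congr.
Qed.

Lemma pinv_sqr n (A : 'M[R]_n) : A^T = A -> pinv (A *m A) = pinv A *m pinv A.
Proof.
move=> sA; have [P1 P2 P3 P4] := pinvP sA; have AAp := pinv_comm sA.
have AAAp : A *m A *m pinv A = A by rewrite -mulmxA AAp mulmxA P1.
have ApApA : pinv A *m pinv A *m A = pinv A by rewrite -mulmxA -AAp mulmxA P2.
have sAA : (A *m A)^T = A *m A by rewrite trmx_mul sA.
apply: (penrose_uniq (pinvP sAA)); split.
- by rewrite !mulmxA AAAp P1.
- by rewrite !mulmxA ApApA P2.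
- by rewrite mulmxA AAAp P3.
- by rewrite mulmxA ApApA P4.
Qed.

Lemma mxtrace_psd_ge0 n (A : 'M[R]_n) : psd A -> 0 <= \tr A.
Proof.
move=> [_ A_ge0]; apply: sumr_ge0 => i _; have := A_ge0 (delta_mx i 0).
by rewrite trmx_delta -rowE -colE !mxE.
Qed.

Lemma mxtrace_mul_psd_ge0 n (A S : 'M[R]_n) : psd A -> psd S -> 0 <= \tr (A *m S).
Proof.
move=> psdA /psd_sqrtP [[sT _] <-].
by rewrite mulmxA mxtrace_mulC mulmxA -{1}sT; exact/mxtrace_psd_ge0/psd_congr.
Qed.

Lemma psd_sym_idem n (P : 'M[R]_n) : P^T = P -> P *m P = P -> psd P.
Proof. by move=> sP PP; have := psd_gram P; rewrite sP PP. Qed.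

Lemma psd_sub_congr_partial_isometry n (N Y : 'M[R]_n) : N^T = N ->
  Y *m Y^T *m Y = Y -> psd (N *m N - N *m Y *m Y^T *m N).
Proof.
move=> sN YYtY; set T := Y *m Y^T.
have sT : (1%:M - T)^T = 1%:M - T by rewrite linearB /= trmx1 trmx_mul trmxK.
have TT : (1%:M - T) *m (1%:M - T) = 1%:M - T.
  by rewrite mulmxBl mul1mx mulmxBr mulmx1 mulmxA YYtY subrr subr0.
have := psd_congr N (psd_sym_idem sT TT).
by rewrite sN mulmxBr mulmx1 mulmxBl !mulmxA.
Qed.

Lemma sym_mul_gram_id m n (P : 'M[R]_m) (X : 'M[R]_(m, n)) :
  P^T = P -> P *m (X *m X^T) = X *m X^T -> P *m X = X.
Proof.
move=> sP PXX; have XXP : X *m X^T *m P = X *m X^T.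
  by have := congr1 trmx PXX; rewrite !trmx_mul trmxK sP.
suff /(congr1 trmx) : (X - P *m X)^T = 0 by rewrite trmxK trmx0 => /subr0_eq.
apply: gram_eq0; rewrite trmxK linearB /= trmx_mul sP mulmxBl !mulmxBr.
by rewrite !mulmxA XXP -(mulmxA P) PXX XXP !subrr.
Qed.

Lemma sym_mul_psd_form_id m k (P : 'M[R]_m) (X : 'M[R]_(m, k)) (Q : 'M[R]_k) :
  psd Q -> P^T = P ->
  P *m (X *m Q *m X^T) = X *m Q *m X^T -> P *m X *m Q = X *m Q.
Proof.
move=> /psd_sqrtP [[sN _] NN] sP; set N := psd_sqrt Q in sN NN *.
have XQX : X *m Q *m X^T = (X *m N) *m (X *m N)^T.
  by rewrite trmx_mul sN -NN !mulmxA.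
rewrite XQX => /(sym_mul_gram_id sP) PXN.
by rewrite -NN !mulmxA -(mulmxA P) PXN.
Qed.

Lemma weak_duality n (Q M B S Sm Pi : 'M[R]_n) : psd M -> B^T = B ->
  Sset B M S Sm -> Omega Q M Pi -> dual_obj B Pi <= primal_obj Q M B S Sm.
Proof.
move=> psdM sB [psdS psdSm _ _ BM_SSmBM] [psdQPi PiT].
have [sM sS sSm] := And3 psdM.1 psdS.1 psdSm.1.
have [MMpM _ _ _] := pinvP sM; have sMp := pinv_sym sM.
set Mp := pinv M in MMpM sMp PiT *.
have PiMpM : Pi *m Mp *m M = Pi.
  by rewrite -[RHS]trmxK PiT !trmx_mul sMp sM trmxK mulmxA.
have MBSmS : M *m B *m Sm *m S = M *m B.
  by have := congr1 trmx BM_SSmBM; rewrite !trmx_mul sB sM sS sSm !mulmxA => <-.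
set D := Pi - Sm *m B *m M.
have psdD : psd (D *m Mp *m D^T).
  by have := psd_congr D^T (psd_pinv psdM); rewrite trmxK.
have mxtrace_trS Y : \tr (Y^T *m S) = \tr (Y *m S).
  by rewrite -mxtrace_tr trmx_mul trmxK sS mxtrace_mulC.
have cross_tr : \tr (Pi *m Mp *m (Sm *m B *m M)^T *m S) = \tr (Pi *m B).
  have -> : Pi *m Mp *m (Sm *m B *m M)^T *m S = Pi *m Mp *m (M *m B *m Sm *m S).
    by rewrite !trmx_mul sSm sB sM !mulmxA.
  by rewrite MBSmS !mulmxA PiMpM.
have cross_tr' : \tr (Sm *m B *m M *m Mp *m Pi^T *m S) = \tr (Pi *m B).
  have -> : Sm *m B *m M *m Mp *m Pi^T = (Pi *m Mp *m (Sm *m B *m M)^T)^T.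
    by rewrite !trmx_mul !trmxK sMp !mulmxA.
  by rewrite mxtrace_trS cross_tr.
have quad_tr :
    \tr (Sm *m B *m M *m Mp *m (Sm *m B *m M)^T *m S) = \tr (M *m (B *m Sm *m B)).
  have -> : Sm *m B *m M *m Mp *m (Sm *m B *m M)^T *m S = Sm *m B *m (M *m B *m Sm *m S).
    rewrite !trmx_mul sSm sB sM !mulmxA.
    by rewrite -(mulmxA _ Mp) -(mulmxA _ M) (mulmxA M Mp) MMpM.
  by rewrite MBSmS mxtrace_mulC !mulmxA.
have DtE : D^T = Pi^T - (Sm *m B *m M)^T by rewrite linearB.
have := mxtrace_mul_psd_ge0 psdQPi psdS; have := mxtrace_mul_psd_ge0 psdD psdS.
rewrite DtE /D !(mulmxBl, mulmxBr) !(raddfB (@mxtrace R n)) /= cross_tr cross_tr' quad_tr.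
rewrite /dual_obj /primal_obj mxtraceZ -/Mp; lra.
Qed.

End RealSymmetric.

Section Attainment.
Variables (R : realType) (n : nat) (Q M B : 'M[R]_n).
Hypotheses (psdQ : psd Q) (psdM : psd M) (psdB : psd B)
  (MB_sub_Q : colspace_sub (B *m M *m B) Q).

Local Notation MB := (B *m M *m B).
Let K := psd_sqrt MB.
Let C := psd_sqrt (K *m Q *m K).
Local Notation Kp := (pinv K).
Local Notation Cp := (pinv C).

Lemma psd_MB : psd MB.
Proof. by have := psd_congr B psdM; rewrite psdB.1. Qed.

Lemma psd_sqrt_MB : psd K /\ K *m K = MB.
Proof. exact/psd_sqrtP/psd_MB. Qed.

Lemma psd_sqrt_KQK : psd C /\ C *m C = K *m Q *m K.
Proof.
apply/psd_sqrtP; have [[sK _] _] := psd_sqrt_MB.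
by have := psd_congr K psdQ; rewrite sK.
Qed.

Lemma K_pinvK_C : K *m Kp *m C = C.
Proof.
have [[sK _] _] := psd_sqrt_MB; have [K1 _ K3 _] := pinvP sK.
have [[sC _] CC] := psd_sqrt_KQK.
by apply: sym_mul_gram_id K3 _; rewrite sC CC !mulmxA K1.
Qed.

Lemma pinvC_pinvK_K : Cp *m Kp *m K = Cp.
Proof.
have [[sK _] _] := psd_sqrt_MB; have [[sC _] _] := psd_sqrt_KQK.
have [_ C2 _ _] := pinvP sC.
have KKpCp : K *m Kp *m Cp = Cp.
  by rewrite -{1}C2 -pinv_comm // !mulmxA K_pinvK_C pinv_comm // C2.
by have := congr1 trmx KKpCp; rewrite !trmx_mul pinv_sym // sK pinv_sym // mulmxA.
Qed.

Lemma C_pinvC_K : C *m Cp *m K = K.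
Proof.
have [[sK _] KK] := psd_sqrt_MB; have [[sC _] CC] := psd_sqrt_KQK.
have [K1 _ _ _] := pinvP sK; have [C1 _ C3 _] := pinvP sC.
have CCpKQ : C *m Cp *m K *m Q = K *m Q.
  by apply: sym_mul_psd_form_id psdQ C3 _; rewrite sK -CC !mulmxA C1.
(* The range hypothesis gives K = Q Z, so Im K = Im (K K) ⊆ Im (K Q) ⊆ Im C. *)
have [D MBt] := submxP MB_sub_Q.
have KQ : K = Q *m (D^T *m Kp).
  have MB_QD : MB = Q *m D^T by rewrite -[LHS]trmxK MBt trmx_mul trmxK.
  by rewrite -{1}K1 -mulmxA -pinv_comm // mulmxA KK MB_QD mulmxA.
apply: sym_mul_gram_id C3 _.
by rewrite sK {2 4}KQ !mulmxA CCpKQ.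
Qed.

Lemma K_pinvK_BM : K *m Kp *m B *m M = B *m M.
Proof.
have [[sK _] KK] := psd_sqrt_MB; have [K1 _ K3 _] := pinvP sK.
by apply: sym_mul_psd_form_id psdM K3 _; rewrite psdB.1 -KK !mulmxA K1.
Qed.

Lemma opt_pair_feasible : Sset B M (K *m Cp *m K) (Kp *m C *m Kp).
Proof.
have [[sK _] _] := psd_sqrt_MB; have [psdC _] := psd_sqrt_KQK.
have [K1 K2 _ _] := pinvP sK.
have KCpC : K *m Cp *m C = K.
  by have := congr1 trmx C_pinvC_K; rewrite !trmx_mul pinv_sym psdC.1 // sK mulmxA.
have SSm : K *m Cp *m K *m (Kp *m C *m Kp) = K *m Kp.
  by rewrite !mulmxA -(mulmxA _ K) -(mulmxA _ (K *m Kp)) K_pinvK_C KCpC.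
split.
- by have := psd_congr K (psd_pinv psdC); rewrite sK.
- by have := psd_congr Kp psdC; rewrite pinv_sym.
- by rewrite SSm !mulmxA K1.
- by rewrite -mulmxA SSm -!mulmxA (mulmxA Kp K) K2.
- by rewrite SSm K_pinvK_BM.
Qed.

Lemma mxtrace_Q_K_pinvC_K : \tr (Q *m K *m Cp *m K) = \tr C.
Proof.
have [[sC _] CC] := psd_sqrt_KQK; have [C1 _ _ _] := pinvP sC.
by rewrite mxtrace_mulC !mulmxA -CC -mulmxA pinv_comm // mulmxA C1.
Qed.

Lemma opt_primal_value : primal_obj Q M B (K *m Cp *m K) (Kp *m C *m Kp) = 2%:R * \tr C.
Proof.
have [[sK _] KK] := psd_sqrt_MB; have [K1 _ _ _] := pinvP sK.
rewrite /primal_obj !mulmxA mxtrace_Q_K_pinvC_K mulr_natl mulr2n; congr (_ + _).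
rewrite mxtrace_mulC !mulmxA mxtrace_mulC !mulmxA.
have -> : Kp *m B *m M *m B = Kp *m (K *m K) by rewrite KK !mulmxA.
by rewrite mulmxA -pinv_comm // K1 K_pinvK_C.
Qed.

Lemma opt_Pi_eq :
  Q *m (K *m Cp *m K) *m pinv MB *m B *m M = Q *m K *m Cp *m Kp *m B *m M.
Proof.
have [[sK _] KK] := psd_sqrt_MB; have [_ K2 _ _] := pinvP sK.
rewrite -KK pinv_sqr // !mulmxA -(mulmxA _ K Kp) -(mulmxA _ (K *m Kp)).
by rewrite pinv_comm // K2.
Qed.

Lemma opt_dual_value : dual_obj B (Q *m K *m Cp *m Kp *m B *m M) = 2%:R * \tr C.
Proof.
have [[sK _] KK] := psd_sqrt_MB; have [K1 _ _ _] := pinvP sK.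
rewrite /dual_obj mxtraceZ -!mulmxA (mulmxA B) -KK !mulmxA.
rewrite -(mulmxA _ Kp K) -(mulmxA _ (Kp *m K)) -pinv_comm // K1.
by rewrite mxtrace_Q_K_pinvC_K mulr_natl.
Qed.

Lemma opt_Pi_feasible : Omega Q M (Q *m K *m Cp *m Kp *m B *m M).
Proof.
have [[sK _] KK] := psd_sqrt_MB; have [[sC _] CC] := psd_sqrt_KQK.
have [_ C2 _ _] := pinvP sC; have [M1 _ _ _] := pinvP psdM.1.
have [[sN _] NN] := psd_sqrtP psdQ; set N := psd_sqrt Q in sN NN.
set W := Q *m K *m Cp *m Kp.
have PiT : (W *m B *m M)^T = M *m B *m W^T.
  by rewrite !trmx_mul psdM.1 psdB.1 mulmxA.
split; last by rewrite PiT !mulmxA M1.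
have WK : W *m K = Q *m K *m Cp.
  by rewrite /W -!mulmxA (mulmxA Cp) pinvC_pinvK_K !mulmxA.
have -> : W *m B *m M *m pinv M *m (W *m B *m M)^T = (W *m K) *m (W *m K)^T.
  rewrite PiT !mulmxA -(mulmxA _ (pinv M)) -(mulmxA _ M) (mulmxA M) M1.
  by rewrite (trmx_mul W K) sK mulmxA -(mulmxA W K K) KK !mulmxA.
set Y := N *m K *m Cp.
have -> : W *m K *m (W *m K)^T = N *m Y *m Y^T *m N.
  by rewrite WK -NN !trmx_mul sN !mulmxA.
rewrite -{1}NN; apply: (psd_sub_congr_partial_isometry sN).
have YtY : Y^T *m Y = C *m Cp.
  rewrite !trmx_mul sN sK pinv_sym // !mulmxA -(mulmxA _ N N) NN.
  rewrite -(mulmxA Cp K Q) -(mulmxA Cp (K *m Q) K) -CC mulmxA -pinv_comm //.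
  by have [-> _ _ _] := pinvP sC.
by rewrite -mulmxA YtY /Y -!mulmxA (mulmxA Cp) C2.
Qed.

End Attainment.

Lemma opt_dual_not_unique (R : realType) : exists (n : nat) (Q M B : 'M[R]_n),
  [/\ psd Q, psd M, psd B & colspace_sub (B *m M *m B) Q] /\
  exists P1 P2 : 'M[R]_n,
    [/\ P1 <> P2, Omega Q M P1, Omega Q M P2, dual_obj B P1 = dual_obj B P2
      & forall Pi, Omega Q M Pi -> dual_obj B Pi <= dual_obj B P1].
Proof.
pose E : 'M[R]_2 := delta_mx 0 0.
have sE : E^T = E by rewrite trmx_delta.
have EE : E *m E = E by rewrite mul_delta_mx.
have psdE : psd E := psd_sym_idem sE EE.
have s1 : (1%:M : 'M[R]_2)^T = 1%:M by rewrite trmx1.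
have psd1 : psd (1%:M : 'M[R]_2) by apply: psd_sym_idem s1 (mulmx1 _).
have pinv1 : pinv (1%:M : 'M[R]_2) = 1%:M.
  by apply: (penrose_uniq (pinvP s1)); split; rewrite ?mulmx1.
have OmegaP (P : 'M[R]_2) : P *m P^T *m P = P -> Omega 1%:M 1%:M P.
  move=> PPtP; rewrite /Omega pinv1 !mulmx1 mul1mx; split=> //.
  by have := psd_sub_congr_partial_isometry s1 PPtP; rewrite !mul1mx !mulmx1.
exists 2%N, 1%:M, 1%:M, E; split.
  by split=> //; rewrite /colspace_sub trmx1 submx1.
exists E, 1%:M; split.
- by move/matrixP/(_ 1 1)/eqP; rewrite !mxE /= eq_sym oner_eq0.
- by apply: OmegaP; rewrite sE !EE.
- by apply: OmegaP; rewrite trmx1 !mulmx1.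
- by rewrite /dual_obj EE mul1mx.
move=> Pi OPi; have SsetE : Sset E 1%:M E E by split; rewrite ?mulmx1 ?EE.
apply: le_trans (weak_duality psd1 sE SsetE OPi) _.
by rewrite /primal_obj /dual_obj !mul1mx !EE mxtraceZ mulr_natl mulr2n.
Qed.

Theorem theorem6 :
  (forall (R : realType) (n : nat) (Q M B : 'M[R]_n),
    psd Q -> psd M -> psd B ->
    colspace_sub (B *m M *m B) Q ->
    let MB := B *m M *m B in
    let MBh := psd_sqrt MB in
    let C := psd_sqrt (MBh *m Q *m MBh) in
    let v := 2%:R * \tr C in
    let Sst := MBh *m pinv C *m MBh in
    let Smst := pinv MBh *m C *m pinv MBh in
    let Pist := Q *m Sst *m pinv MB *m B *m M in
    (* minimum over 𝒮, attained at (S*, S^-* ) *)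
    [/\ Sset B M Sst Smst, primal_obj Q M B Sst Smst = v
      & forall S Sm, Sset B M S Sm -> v <= primal_obj Q M B S Sm]
    /\
    (* maximum over Ω, attained at Π* *)
    [/\ Pist = Q *m MBh *m pinv C *m pinv MBh *m B *m M,
        Omega Q M Pist, dual_obj B Pist = v
      & forall Pi, Omega Q M Pi -> dual_obj B Pi <= v])
  /\
  (* the optimal Π* is in general not unique *)
  (forall R : realType, exists (n : nat) (Q M B : 'M[R]_n),
    [/\ psd Q, psd M, psd B & colspace_sub (B *m M *m B) Q] /\
    exists P1 P2 : 'M[R]_n,
      [/\ P1 <> P2, Omega Q M P1, Omega Q M P2,
          dual_obj B P1 = dual_obj B P2
        & forall Pi, Omega Q M Pi -> dual_obj B Pi <= dual_obj B P1]).
Proof.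
split=> [R n Q M B psdQ psdM psdB MB_sub_Q MB MBh C v Sst Smst Pist|R].
  have Pist_eq : Pist = Q *m MBh *m pinv C *m pinv MBh *m B *m M.
    exact: opt_Pi_eq.
  have S_feasible : Sset B M Sst Smst by exact: opt_pair_feasible.
  have Pi_feasible : Omega Q M Pist by rewrite Pist_eq; exact: opt_Pi_feasible.
  have primal_v : primal_obj Q M B Sst Smst = v by exact: opt_primal_value.
  have dual_v : dual_obj B Pist = v by rewrite Pist_eq; exact: opt_dual_value.
  split; split=> //.
    by move=> S Sm SS; rewrite -dual_v; exact: weak_duality psdM psdB.1 SS Pi_feasible.
  by move=> Pi OPi; rewrite -primal_v; exact: weak_duality psdM psdB.1 S_feasible OPi.
exact: opt_dual_not_unique.
Qed.
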